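(* Let $\mathcal{H}^c_{A_{n-1}}$ be the degenerate affine Hecke–Clifford algebra of type $A_{n-1}$. Let $\gamma=(\gamma_1,\dots,\gamma_k)$ be a composition of $n$, let $B_j=\{\gamma_1+\dots+\gamma_{j-1}+1,\dots,\gamma_1+\dots+\gamma_j\}$, and let $w_\gamma\in S_n$ be the product over $j$ of the cycles $(a\ \ a+1\ \cdots\ b)$ where $B_j=\{a,\dots,b\}$. Let $I\subseteq\{1,\dots,n\}$ with $|I|$ even, and $I_j=I\cap B_j$. If every $|I_j|$ is even, then $w_\gamma c_I-\epsilon w_\gamma\in[\mathcal{H}^c_{A_{n-1}},\mathcal{H}^c_{A_{n-1}}]$ for some $\epsilon\in\{1,-1\}$; otherwise $w_\gamma c_I\in[\mathcal{H}^c_{A_{n-1}},\mathcal{H}^c_{A_{n-1}}]$.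
   Context: $\mathcal{H}^c_{A_{n-1}}$ (parameter $u\in\mathbb{C}$) is the $\mathbb{C}$-algebra generated by commuting $x_1,\dots,x_n$, Clifford generators $c_1,\dots,c_n$ ($c_i^2=1$, $c_ic_j=-c_jc_i$ for $i\ne j$) and $S_n$ (simple reflections $s_i=(i,i+1)$), with $\mathbb{C}[x]$, the Clifford algebra and $\mathbb{C}S_n$ subalgebras and relations $x_ic_i=-c_ix_i$, $x_ic_j=c_jx_i$ ($i\ne j$), $\sigma c_i=c_{\sigma(i)}\sigma$ ($\sigma\in S_n$), $x_{i+1}s_i-s_ix_i=u(1-c_{i+1}c_i)$, $x_js_i=s_ix_j$ ($j\ne i,i+1$). A composition of $n$ is a sequence of positive integers summing to $n$. For $I=\{i_1<\dots<i_m\}$, $c_I=c_{i_1}\cdots c_{i_m}$. $[H,H]$ is the linear span of all $hh'-h'h$. *)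

From HB Require Import structures.
From mathcomp Require Import all_boot all_order all_fingroup all_algebra.
From mathcomp Require Import complex.
From mathcomp Require Import reals.
Set Implicit Arguments. Unset Strict Implicit. Unset Printing Implicit Defensive.
Import Order.TTheory GRing.Theory Num.Theory.
Local Open Scope ring_scope.

Definition in_comm_span (K : pzRingType) (A : lalgType K) (x : A) : Prop :=
  exists s : seq (K * A * A),
    x = \sum_(t <- s) t.1.1 *: (t.1.2 * t.2 - t.2 * t.1.2).

(* Simple transposition (a a+1) of {0,..,n-1} (0-based indices);
   identity if a+1 is out of range (never used then). *)
Definition sw (n : nat) (a : nat) : {perm 'I_n} :=
  match @insub _ (fun k => k < n)%N _ a, @insub _ (fun k => k < n)%N _ a.+1 with
  | Some i, Some j => tperm i j
  | _, _ => 1%g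
  end.

(* cyc a m = the cycle (a a+1 ... a+m-1) (a -> a+1 -> ... -> a+m-1 -> a),
   0-based, built as the composition s_a o s_{a+1} o ... o s_{a+m-2}.
   Recall that in mathcomp (s * t)%g x = t (s x), i.e. (s * t)%g = t o s. *)
Fixpoint cyc (n : nat) (a m : nat) : {perm 'I_n} :=
  match m with
  | 0 | 1 => 1%g
  | m'.+1 => (cyc n a.+1 m' * sw n a)%g
  end.

Fixpoint wgam_aux (n : nat) (off : nat) (g : seq nat) : {perm 'I_n} :=
  match g with
  | [::] => 1%g
  | b :: g' => (wgam_aux n (off + b) g' * cyc n off b)%g
  end.

Definition wgam (n : nat) (g : seq nat) : {perm 'I_n} := wgam_aux n 0 g.

Definition is_composition (n : nat) (g : seq nat) : Prop :=
  all (fun b => 0 < b)%N g /\ sumn g = n.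

(* 0-based block j : B_j = { i | sum_{l<j} g_l <= i < sum_{l<=j} g_l } *)
Definition in_block (g : seq nat) (j : nat) (i : nat) : bool :=
  (sumn (take j g) <= i < sumn (take j.+1 g))%N.

Definition cI (K : pzRingType) (A : lalgType K) (n : nat) (Cl : 'I_n -> A)
    (I : {set 'I_n}) : A :=
  \prod_(i < n | i \in I) Cl i.

From HB Require Import structures.
From mathcomp Require Import all_boot all_order all_fingroup all_algebra.
From mathcomp Require Import complex reals.
From mathcomp Require Import zify.
Set Implicit Arguments. Unset Strict Implicit. Unset Printing Implicit Defensive.
Import Order.TTheory GRing.Theory Num.Theory.

(* Modulo [H, H], conjugating w c_S by the involution c_(w y) gives
   w c_y c_S c_(w y) = +-w c_S', where S' toggles w y and y in S.  When y and
   y + 1 lie in one block, w y = y + 1; so if every block meets S evenly,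
   toggling the largest element of S together with its predecessor empties S
   and w c_S = +-w modulo [H, H].  If a block B meets S oddly, so does the
   complement of B.  Then w is the commuting product of its restrictions w1 to
   B and w2 to the complement, and w c_S = +-a b with a = w1 c_(S :&: B) and
   b = w2 c_(S :\: B).  Since a and b anticommute, a b = (a b - b a) / 2. *)

Definition cycn (a m x : nat) : nat :=
  if a <= x < a + m then (if x.+1 == a + m then a else x.+1) else x.

Lemma cycn_out a m x : ~~ (a <= x < a + m) -> cycn a m x = x.
Proof. by rewrite /cycn => /negbTE ->. Qed.

Lemma sw_val n a (y : 'I_n) : a.+1 < n ->
  sw n a y = (if y == a :> nat then a.+1 else if y == a.+1 :> nat then a else y) :> nat.
Proof.
move=> lt_an; rewrite /sw.
case: insubP => [i _ vi|]; last by rewrite ltnW.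
case: insubP => [j _ vj|]; last by rewrite lt_an.
case: (tpermP i j y) => [->|->|/eqP yi /eqP yj]; rewrite ?vi ?vj ?eqxx //.
  by rewrite ifN //; lia.
by rewrite -vj -vi !(inj_eq val_inj) (negbTE yi) (negbTE yj).
Qed.

Lemma cyc_val n a m (x : 'I_n) : a + m <= n -> cyc n a m x = cycn a m x :> nat.
Proof.
elim: m a => [|[|m] IH] a le_amn.
- by rewrite perm1 cycn_out //; lia.
- by rewrite perm1 /cycn; case: ifP => // /andP[? ?]; rewrite ifT //; lia.
rewrite [cyc _ _ _]/= permM sw_val; last lia.
rewrite IH; last lia.
rewrite /cycn; do ![case: ifP => /=]; move=> *; lia.
Qed.

Lemma sumn_take_succ (g : seq nat) j :
  sumn (take j.+1 g) = sumn (take j g) + nth 0 g j.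
Proof. by elim: g j => [|b g IH] [|j] //=; rewrite ?take0 ?addn0 // IH addnA. Qed.

Lemma in_blockE g j x :
  in_block g j x = (sumn (take j g) <= x < sumn (take j g) + nth 0 g j).
Proof. by rewrite /in_block sumn_take_succ. Qed.

Lemma leq_sumn_take (g : seq nat) i j : i <= j -> sumn (take i g) <= sumn (take j g).
Proof. by move=> le_ij; rewrite -(subnKC le_ij) takeD sumn_cat leq_addr. Qed.

Lemma in_block_inj g j j' x : in_block g j x -> in_block g j' x -> j = j'.
Proof.
rewrite /in_block => xj xj'.
by have [/(leq_sumn_take g)|/(leq_sumn_take g)|] := ltngtP j j'; lia.
Qed.

Lemma in_block_exists g x : x < sumn g -> exists2 j, j < size g & in_block g j x.
Proof.
elim: g x => [|b g IH] x //= lt_x.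
have [lt_xb|le_bx] := ltnP x b.
  by exists 0; rewrite // /in_block /= take0 addn0.
have [j lt_j xj] := IH (x - b) ltac:(lia).
by exists j.+1 => //; move: xj; rewrite /in_block /=; lia.
Qed.

Lemma wgam_aux_below n off g (x : 'I_n) :
  off + sumn g <= n -> x < off -> wgam_aux n off g x = x.
Proof.
elim: g off => [|b g IH] off /= le_n lt_x; first by rewrite perm1.
apply: ord_inj; rewrite permM IH ?cyc_val ?cycn_out //; lia.
Qed.

Lemma wgam_aux_val n off g j (x : 'I_n) : off + sumn g <= n ->
  off + sumn (take j g) <= x < off + sumn (take j.+1 g) ->
  wgam_aux n off g x = cycn (off + sumn (take j g)) (nth 0 g j) x :> nat.
Proof.
elim: g off j => [|b g IH] off [|j] /=; rewrite ?take0 ?addn0 => le_n x_in; try lia.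
  by rewrite permM wgam_aux_below ?cyc_val //; lia.
rewrite permM cyc_val; last lia.
rewrite (IH _ j) -?addnA; try lia.
move: x_in; rewrite sumn_take_succ => x_in.
by rewrite cycn_out // /cycn; case: ifP => [/andP[? ?]|]; [case: ifP|]; lia.
Qed.

Lemma wgam_val n g j (x : 'I_n) : sumn g = n -> in_block g j x ->
  wgam n g x = cycn (sumn (take j g)) (nth 0 g j) x :> nat.
Proof. by move=> sum_g xj; rewrite /wgam (wgam_aux_val (j := j)) ?sum_g. Qed.

Lemma wgam_succ n g j (x : 'I_n) : sumn g = n ->
  in_block g j x -> in_block g j x.+1 -> wgam n g x = x.+1 :> nat.
Proof.
move=> sum_g xj; rewrite (wgam_val sum_g xj) /cycn; move: xj; rewrite !in_blockE.
by move=> /andP[-> ->] /andP[_ ?]; rewrite ifN //; lia.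
Qed.

Lemma in_block_wgam n g j (x : 'I_n) : sumn g = n ->
  in_block g j x -> in_block g j (wgam n g x).
Proof.
move=> sum_g xj; rewrite (wgam_val sum_g xj) /cycn; move: xj; rewrite !in_blockE.
by move=> /andP[? ?]; rewrite ifT; [case: ifP|]; lia.
Qed.

Lemma wgam_astabs_block n g j : sumn g = n ->
  wgam n g \in ('N([set i : 'I_n | in_block g j i] | 'P))%g.
Proof.
move=> sum_g; apply/astabsP => x; rewrite !inE /=.
apply/idP/idP; last exact: in_block_wgam.
have [j' _ xj'] : exists2 j', j' < size g & in_block g j' x.
  by apply: in_block_exists; rewrite sum_g.
by move=> wxj; rewrite -(in_block_inj (in_block_wgam sum_g xj') wxj).
Qed.

Definition toggle (T : finType) (S : {set T}) (a : T) : {set T} :=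
  if a \in S then S :\ a else a |: S.

Lemma in_toggle (T : finType) (S : {set T}) a i :
  (i \in toggle S a) = (i == a) (+) (i \in S).
Proof.
by rewrite /toggle; case: ifP => aS; rewrite !inE; case: eqVneq => // ->; rewrite aS.
Qed.

Lemma odd_card_toggle (T : finType) (S : {set T}) a : odd #|toggle S a| = ~~ odd #|S|.
Proof.
rewrite /toggle; case: ifP => aS; last by rewrite cardsU1 aS.
by rewrite (cardsD1 a S) aS negbK.
Qed.

Lemma odd_card_toggle_filter (T : finType) (S : {set T}) (p : pred T) a :
  odd #|[set i in toggle S a | p i]| = odd #|[set i in S | p i]| (+) p a.
Proof.
have -> : [set i in toggle S a | p i] =
    if p a then toggle [set i in S | p i] a else [set i in S | p i].
  apply/setP => i; case: ifP => pa; rewrite !(inE, in_toggle);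
    by case: eqVneq => [->|]; rewrite ?pa ?andbT ?andbF.
by case: (p a); rewrite ?odd_card_toggle ?addbT ?addbF.
Qed.

Definition even_blocks n (g : seq nat) (S : {set 'I_n}) : Prop :=
  forall j, j < size g -> ~~ odd #|[set i in S | in_block g j i]|.

Lemma even_blocks_toggle2 n g (S : {set 'I_n}) j (x y : 'I_n) :
  in_block g j x -> in_block g j y ->
  even_blocks g S -> even_blocks g (toggle (toggle S x) y).
Proof.
move=> xj yj evS j' lt_j'; rewrite !odd_card_toggle_filter.
have -> : in_block g j' x = in_block g j' y.
  apply/idP/idP => h; first by rewrite -(in_block_inj xj h).
  by rewrite -(in_block_inj yj h).
by rewrite addbK evS.
Qed.

Lemma even_blocks_max_pred n g (S : {set 'I_n}) (x : 'I_n) : sumn g = n ->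
  even_blocks g S -> x \in S -> (forall i, i \in S -> i <= x) ->
  exists (y : 'I_n) j, [/\ y.+1 = x :> nat, in_block g j y & in_block g j x].
Proof.
move=> sum_g evS xS max_x.
have [j lt_j xj] : exists2 j, j < size g & in_block g j x.
  by apply: in_block_exists; rewrite sum_g.
set B := [set i in S | in_block g j i].
have xB : x \in B by rewrite inE xS.
have [x' x'B] : exists x', x' \in B :\ x.
  apply/set0Pn; rewrite -card_gt0.
  by move: (evS j lt_j); rewrite -/B (cardsD1 x B) xB; case: #|_|.
move: x'B; rewrite !inE => /and3P[x'x x'S x'j].
have ne_x'x : nat_of_ord x' != x := x'x.
have le_x'x := max_x x' x'S.
have lt_yn : x.-1 < n by have := ltn_ord x; lia.
exists (Ordinal lt_yn), j; split => //=; first lia.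
by move: x'j xj; rewrite /in_block; lia.
Qed.

Lemma even_blocks_ind n g (P : {set 'I_n} -> Prop) : sumn g = n -> P set0 ->
    (forall S y, P (toggle (toggle S (wgam n g y)) y) -> P S) ->
  forall S, even_blocks g S -> P S.
Proof.
move=> sum_g P0 Pstep S.
have [N] : exists N, forall i, i \in S -> i < N by exists n => i _; apply: ltn_ord.
elim: N S => [|N IH] S S_lt evS.
  by have -> : S = set0 by apply/setP => i; rewrite inE; apply/negbTE/negP => /S_lt.
have [->//|[x0 x0S]] := set_0Vmem S.
case: (@arg_maxnP _ x0 (fun i => i \in S) (fun i : 'I_n => nat_of_ord i) x0S).
move=> x xS max_x.
have [y [j [yx yj xj]]] := even_blocks_max_pred sum_g evS xS max_x.
have wy : wgam n g y = x by apply: ord_inj; rewrite (wgam_succ sum_g yj) ?yx.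
apply: (Pstep S y); rewrite wy; apply: IH; last exact: even_blocks_toggle2 xj yj evS.
have lt_xN := S_lt x xS.
move=> i; rewrite !in_toggle; case: (eqVneq i y) => [->|_] /=; first lia.
case: (eqVneq i x) => [->|ix]; first by rewrite xS.
have ne_ix : nat_of_ord i != x := ix.
by move=> iS; have := max_x i iS; lia.
Qed.

Local Open Scope ring_scope.

Definition eq_pm (R : pzRingType) (x y : R) := exists b : bool, x = (-1) ^+ b * y.

Section EqPm.
Variable R : pzRingType.
Implicit Types x y z w : R.

Lemma mulr_signCA k x y : x * ((-1) ^+ k * y) = (-1) ^+ k * (x * y).
Proof. by rewrite -signr_odd !mulr_sign; case: odd; rewrite ?mulrN. Qed.

Lemma eq_pm_refl x : eq_pm x x.
Proof. by exists false; rewrite mul1r. Qed.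

Lemma eq_pm_trans y x z : eq_pm x y -> eq_pm y z -> eq_pm x z.
Proof. by move=> [b ->] [b' ->]; exists (b (+) b'); rewrite mulrA signr_addb. Qed.

Lemma eq_pm_sym x y : eq_pm x y -> eq_pm y x.
Proof. by move=> [b ->]; exists b; rewrite mulrA -signr_addb addbb mul1r. Qed.

Lemma eq_pm_signr k x : eq_pm ((-1) ^+ k * x) x.
Proof. by exists (odd k); rewrite signr_odd. Qed.

Lemma eq_pmMl w x y : eq_pm x y -> eq_pm (w * x) (w * y).
Proof. by move=> [b ->]; exists b; rewrite !mulr_sign; case: b; rewrite ?mulrN. Qed.

End EqPm.

Section Clifford.
Variables (R : pzRingType) (I : finType) (c : I -> R).
Hypothesis c_sq : forall i, c i * c i = 1.
Hypothesis c_anti : forall i j, i != j -> c i * c j = - (c j * c i).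
Implicit Types (S P Q : {set I}) (a : I).

Lemma c_commute a b : c a * c b = (-1) ^+ (a != b) * (c b * c a).
Proof. by case: eqVneq => [->|ne_ab]; rewrite ?mul1r // c_anti // mulN1r. Qed.

Lemma c_prod_commute a (l : seq I) :
  c a * \prod_(i <- l) c i = (-1) ^+ count (predC1 a) l * (\prod_(i <- l) c i * c a).
Proof.
elim: l => [|b l IH]; first by rewrite !big_nil expr0 !mul1r mulr1.
rewrite !big_cons mulrA c_commute -!mulrA IH.
rewrite (_ : count _ (b :: l) = (a != b) + count (predC1 a) l)%N 1?eq_sym //.
by rewrite exprD -mulrA mulr_signCA.
Qed.

Lemma c_prod_perm (l1 l2 : seq I) :
  perm_eq l1 l2 -> eq_pm (\prod_(i <- l1) c i) (\prod_(i <- l2) c i).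
Proof.
elim: l1 l2 => [|a l1 IH] l2.
  by rewrite perm_sym => /perm_nilP ->; apply: eq_pm_refl.
move=> eq_l; have a_l2 : a \in l2 by rewrite -(perm_mem eq_l) mem_head.
case/splitPr: a_l2 eq_l => p1 p2 eq_l.
have {}eq_l : perm_eq l1 (p1 ++ p2).
  by rewrite -(perm_cons a); apply: perm_trans eq_l _; rewrite perm_sym -cat1s perm_catCA.
rewrite big_cons big_cat big_cons; apply: eq_pm_trans (eq_pmMl _ (IH _ eq_l)) _.
by rewrite big_cat mulrA c_prod_commute -!mulrA; apply: eq_pm_signr.
Qed.

Lemma c_prod_anti (l1 l2 : seq I) : {in l1, forall i, i \notin l2} ->
  \prod_(i <- l1) c i * \prod_(i <- l2) c i =
    (-1) ^+ (size l1 * size l2) * (\prod_(i <- l2) c i * \prod_(i <- l1) c i).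
Proof.
elim: l1 => [|a l1 IH] l1_l2; first by rewrite !big_nil mul1r mulr1 mul0n expr0 mul1r.
have count_l2 : count (predC1 a) l2 = size l2.
  apply/eqP; rewrite -all_count; apply/allP => i i_l2 /=.
  by apply: contraTneq i_l2 => ->; apply: l1_l2; rewrite mem_head.
rewrite !big_cons -mulrA IH => [|i i_l1]; last by apply: l1_l2; rewrite inE i_l1 orbT.
rewrite mulr_signCA [c a * _]mulrA c_prod_commute count_l2 -!mulrA.
by rewrite [LHS]mulrA -exprD mulSn addnC.
Qed.

Definition cset (S : {set I}) : R := \prod_(i in S) c i.

Lemma cset_enum S : cset S = \prod_(i <- enum S) c i.
Proof. by rewrite /cset /enum_mem big_filter. Qed.

Lemma cset0 : cset set0 = 1.
Proof. by rewrite /cset big_pred0 // => i; rewrite inE. Qed.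

Lemma cset_perm (l : seq I) S :
  uniq l -> l =i S -> eq_pm (\prod_(i <- l) c i) (cset S).
Proof.
move=> l_uniq l_S; rewrite cset_enum; apply: c_prod_perm.
by apply: uniq_perm; rewrite ?enum_uniq // => i; rewrite mem_enum l_S.
Qed.

Lemma cset_toggle_mull a S : eq_pm (c a * cset S) (cset (toggle S a)).
Proof.
rewrite /toggle; case: ifP => aS.
  have S_perm : eq_pm (\prod_(i <- a :: enum (S :\ a)) c i) (cset S).
    apply: cset_perm => [|i]; first by rewrite /= mem_enum setD11 enum_uniq.
    by rewrite inE mem_enum in_setD1; case: eqVneq => // ->.
  apply: eq_pm_trans (eq_pmMl _ (eq_pm_sym S_perm)) _.
  by rewrite big_cons mulrA c_sq mul1r -cset_enum; apply: eq_pm_refl.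
have S_perm : eq_pm (\prod_(i <- a :: enum S) c i) (cset (a |: S)).
  apply: cset_perm => [|i]; first by rewrite /= mem_enum aS enum_uniq.
  by rewrite inE mem_enum in_setU1.
by move: S_perm; rewrite big_cons -cset_enum.
Qed.

Lemma cset_toggle_mulr a S : eq_pm (cset S * c a) (cset (toggle S a)).
Proof.
apply: eq_pm_trans (cset_toggle_mull a S).
by rewrite cset_enum c_prod_commute; apply/eq_pm_sym/eq_pm_signr.
Qed.

Lemma cset_split S P : eq_pm (cset S) (cset (S :&: P) * cset (S :\: P)).
Proof.
rewrite !cset_enum -big_cat; apply/eq_pm_sym; rewrite -cset_enum.
apply: cset_perm => [|i].
  rewrite cat_uniq !enum_uniq andbT /=; apply/hasPn => i.
  by rewrite !mem_enum !inE => /andP[/negbTE ->]; rewrite andbF.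
by rewrite mem_cat !mem_enum !inE; case: (i \in P); rewrite ?andbT ?andbF ?orbF.
Qed.

Lemma cset_anti P Q : [disjoint P & Q] ->
  cset P * cset Q = (-1) ^+ (#|P| * #|Q|) * (cset Q * cset P).
Proof.
move=> PQ; rewrite !cset_enum c_prod_anti -?cardE // => i.
by rewrite !mem_enum => /(disjointFr PQ) ->.
Qed.

End Clifford.

Local Notation "x ≡ y" := (in_comm_span (x - y)) (at level 70, no associativity).

Section CommutatorSpan.
Variables (K : pzRingType) (A : lalgType K).
Implicit Types a b u v x y z : A.

Lemma comm_span0 : in_comm_span (0 : A).
Proof. by exists [::]; rewrite big_nil. Qed.

Lemma comm_spanD x y : in_comm_span x -> in_comm_span y -> in_comm_span (x + y).
Proof. by move=> [s ->] [s' ->]; exists (s ++ s'); rewrite big_cat. Qed.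

Lemma comm_spanZ (k : K) x : in_comm_span x -> in_comm_span (k *: x).
Proof.
move=> [s ->]; exists [seq (k * t.1.1, t.1.2, t.2) | t <- s].
by rewrite big_map scaler_sumr; apply: eq_bigr => t _; rewrite scalerA.
Qed.

Lemma comm_span_commutator a b : a * b ≡ b * a.
Proof. by exists [:: (1, a, b)]; rewrite big_seq1 scale1r. Qed.

Lemma comm_congr_refl x : x ≡ x.
Proof. by rewrite subrr; apply: comm_span0. Qed.

Lemma comm_congr_trans y x z : x ≡ y -> y ≡ z -> x ≡ z.
Proof. by move=> xy yz; rewrite -(subrKA y); apply: comm_spanD. Qed.

Lemma comm_congrZ (k : K) x y : x ≡ y -> k *: x ≡ k *: y.
Proof. by rewrite -scalerBr; apply: comm_spanZ. Qed.

Lemma comm_congr_conj u v a : v * u = 1 -> a ≡ u * a * v.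
Proof.
by move=> vu; rewrite -mulrA -{1}[a]mulr1 -vu mulrA; apply: comm_span_commutator.
Qed.

End CommutatorSpan.

Lemma comm_span_anticomm (K : unitRingType) (A : lalgType K) (a b : A) :
  (2%:R : K) \is a GRing.unit -> b * a = - (a * b) -> in_comm_span (a * b).
Proof.
move=> two_unit ba; rewrite -[a * b]scale1r -(mulVr two_unit) -scalerA.
apply: comm_spanZ; rewrite scaler_nat mulr2n -[X in _ + X]opprK -ba.
exact: comm_span_commutator.
Qed.

Lemma restr_perm_splitC (I : finType) (B : {set I}) (s : {perm I}) :
  s \in ('N(B | 'P))%g -> s = (restr_perm B s * restr_perm (~: B) s)%g.
Proof.
move=> sB; have sCB : s \in ('N(~: B | 'P))%g by rewrite astabsC.
apply/permP => x; rewrite permM; have [xB|xNB] := boolP (x \in B).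
  rewrite [restr_perm B s x]restr_permE // (out_perm (restr_perm_on _ _)) //.
  by rewrite inE negbK (astabs_act x sB).
by rewrite (out_perm (restr_perm_on B s) xNB) restr_permE // inE.
Qed.

Section HeckeClifford.
Variables (K : unitRingType) (A : lalgType K) (I : finType).
Variables (c : I -> A) (T : {perm I} -> A).
Hypothesis c_sq : forall i, c i * c i = 1.
Hypothesis c_anti : forall i j, i != j -> c i * c j = - (c j * c i).
Hypothesis T_mul : forall s t, T (s * t)%g = T t * T s.
Hypothesis T_c : forall s i, T s * c i = c (s i) * T s.
Implicit Types (s t : {perm I}) (S B : {set I}).

Lemma T_cset_fixed s S :
  {in S, forall i, s i = i} -> T s * cset c S = cset c S * T s.
Proof.
move=> sS; rewrite cset_enum.
have : {subset enum S <= S} by move=> i; rewrite mem_enum.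
elim: (enum S) => [_|a l IH lS]; first by rewrite big_nil mul1r mulr1.
rewrite big_cons mulrA T_c sS ?lS ?mem_head // -mulrA IH ?mulrA // => i i_l.
by rewrite lS // inE i_l orbT.
Qed.

Lemma comm_congr_T_cset_toggle2 s S y : exists b : bool,
  T s * cset c S ≡ (-1) ^+ b *: (T s * cset c (toggle (toggle S (s y)) y)).
Proof.
have [b E] : eq_pm (c y * (cset c S * c (s y))) (cset c (toggle (toggle S (s y)) y)).
  exact: eq_pm_trans (eq_pmMl _ (cset_toggle_mulr c_sq c_anti _ _))
                     (cset_toggle_mull c_sq c_anti _ _).
exists b; apply: comm_congr_trans (comm_congr_conj _ (c_sq (s y))) _.
rewrite mulrA -T_c -!mulrA E mulr_signCA mulr_sign -scaler_sign.
exact: comm_congr_refl.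
Qed.

Lemma comm_span_T_cset_odd s S B : (2%:R : K) \is a GRing.unit ->
    s \in ('N(B | 'P))%g -> odd #|S :&: B| -> odd #|S :\: B| ->
  in_comm_span (T s * cset c S).
Proof.
move=> two_unit sB oddP oddQ; set P := S :&: B; set Q := S :\: B.
set v := restr_perm B s; set t := restr_perm (~: B) s.
have vt : commute v t.
  apply: (perm_onC (restr_perm_on _ _) (restr_perm_on _ _)).
  by rewrite disjoints_subset setCK.
have v_Q : {in Q, forall i, v i = i}.
  by move=> i; rewrite inE => /andP[iNB _]; apply: (out_perm (restr_perm_on _ _)).
have t_P : {in P, forall i, t i = i}.
  move=> i; rewrite inE => /andP[_ iB].
  by apply: (out_perm (restr_perm_on _ _)); rewrite inE iB.
have [b ->] := cset_split c_anti S B.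
rewrite mulr_signCA mulr_sign -scaler_sign; apply: comm_spanZ.
have -> : T s * (cset c P * cset c Q) = T v * cset c P * (T t * cset c Q).
  rewrite (restr_perm_splitC sB) -/v -/t vt T_mul -!mulrA.
  by rewrite (mulrA (T t)) (T_cset_fixed t_P) -mulrA.
apply: comm_span_anticomm => //.
have QP : [disjoint Q & P].
  apply/pred0P => i; rewrite !inE /=.
  by case: (i \in B); rewrite ?andbF.
rewrite -!mulrA (mulrA (cset c Q)) -(T_cset_fixed v_Q) -mulrA (cset_anti c_anti QP).
rewrite (mulrA (cset c P)) -(T_cset_fixed t_P) -signr_odd oddM oddP oddQ mulN1r.
by rewrite !mulrN !mulrA -!T_mul vt.
Qed.

End HeckeClifford.

Theorem proposition3p1p4 (R : realType) (A : algType (complex R))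
    (u : complex R) (n : nat)
    (X : 'I_n -> A) (Cl : 'I_n -> A) (T : {perm 'I_n} -> A)
    (* polynomial part: commuting x_i *)
    (hXX : forall i j, X i * X j = X j * X i)
    (* Clifford part *)
    (hCC : forall i, Cl i * Cl i = 1)
    (hCa : forall i j, i != j -> Cl i * Cl j = - (Cl j * Cl i))
    (* group algebra of S_n ; recall (s * t)%g = t o s in mathcomp *)
    (hT1 : T 1%g = 1)
    (hTM : forall s t : {perm 'I_n}, T (s * t)%g = T t * T s)
    (* mixed relations *)
    (hXC : forall i, X i * Cl i = - (Cl i * X i))
    (hXC' : forall i j, i != j -> X i * Cl j = Cl j * X i)
    (hTC : forall (s : {perm 'I_n}) i, T s * Cl i = Cl (s i) * T s)
    (hXT : forall i j : 'I_n, val j = (val i).+1 ->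
       X j * T (tperm i j) - T (tperm i j) * X i = u *: (1 - Cl j * Cl i))
    (hXT' : forall i j k : 'I_n, val j = (val i).+1 -> k != i -> k != j ->
       X k * T (tperm i j) = T (tperm i j) * X k)
    (gamma : seq nat) (hgamma : is_composition n gamma)
    (I : {set 'I_n}) (hI : ~~ odd #|I|) :
  let w := T (wgam n gamma) in
  let c := cI Cl I in
  let all_even := forall j, (j < size gamma)%N ->
        ~~ odd #|[set i in I | in_block gamma j i]| in
  (all_even -> exists eps : complex R, (eps = 1 \/ eps = -1) /\
                  in_comm_span (w * c - eps *: w)) /\
  (~ all_even -> in_comm_span (w * c)).
Proof.
move=> w c all_even; have [_ sum_gamma] := hgamma.
change c with (cset Cl I); split=> [even_I | not_even_I].
- have [b Eb] : exists b : bool, w * cset Cl I ≡ (-1) ^+ b *: w.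
    pose P S := exists b : bool, w * cset Cl S ≡ (-1) ^+ b *: w.
    apply: (even_blocks_ind (P := P) sum_gamma) even_I => [|S y [b IH]].
      by exists false; rewrite cset0 mulr1 scale1r; apply: comm_congr_refl.
    have [b' step] := comm_congr_T_cset_toggle2 hCC hCa hTC (wgam n gamma) S y.
    exists (b' (+) b); apply: comm_congr_trans step _.
    by rewrite signr_addb -scalerA; apply: comm_congrZ.
  by exists ((-1) ^+ b); split=> //; case: b {Eb}; [right|left].
- have [j odd_j] : exists j : 'I_(size gamma), odd #|[set i in I | in_block gamma j i]|.
    apply/existsP; apply: contra_notT not_even_I => /existsPn even_I j lt_j.
    exact: (even_I (Ordinal lt_j)).
  set B := [set i : 'I_n | in_block gamma j i].
  have odd_IB : odd #|I :&: B| by rewrite -setIdE.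
  apply: (comm_span_T_cset_odd hCa hTM hTC (B := B)) => //.
  - by rewrite unitfE pnatr_eq0.
  - exact: wgam_astabs_block.
  by move: hI; rewrite -(cardsID B I) oddD odd_IB; case: odd.
Qed.
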